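(* Let $m,n\ge1$ and let $u$ be a vertex of the unweighted complete bipartite graph $K_{m,n}$ lying in the part of size $m$. Then $u$ is sedentary if and only if $m\ge3$.
   Context: For a graph with adjacency matrix $A$, the transition matrix is $U(t)=e^{itA}$. A vertex $u$ is sedentary if $\inf_{t>0}|U(t)_{u,u}|\ge C$ for some constant $0<C\le1$. *)

From HB Require Import structures.
From mathcomp Require Import all_boot all_order all_algebra.
From mathcomp Require Import complex.
From mathcomp Require Import all_classical all_reals all_analysis.
Set Implicit Arguments. Unset Strict Implicit. Unset Printing Implicit Defensive.
Import Order.TTheory GRing.Theory Num.Theory ComplexField.
Import numFieldTopology.Exports numFieldNormedType.Exports.
Local Open Scope ring_scope.

HB.instance Definition _ (R : rcfType) :=
  NormedModule.copy (complex R) (complex R)^o.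

(* Vertices of K_{m,n} are 'I_(m+n); vertices i < m form the part of size m,
   vertices i >= m form the part of size n. *)
Definition Kmn_adj (R : realType) (m n : nat) : 'M[R[i]]_(m + n) :=
  \matrix_(i, j) (((i < m)%N != (j < m)%N)%:R).

Definition mxexp (R : realType) (N : nat) (M : 'M[R[i]]_N) : 'M[R[i]]_N :=
  \matrix_(i, j) limn (series (fun k : nat => (M ^+ k) i j / (k`!)%:R)).

Definition transition (R : realType) (N : nat) (A : 'M[R[i]]_N) (t : R)
  : 'M[R[i]]_N := mxexp ((('i%C * (t%:C)%C) : R[i]) *: A).

(* u is sedentary: there is 0 < C <= 1 with inf_{t>0} |U(t)_{u,u}| >= C,
   i.e. |U(t)_{u,u}| >= C for all t > 0. *)
Definition sedentary (R : realType) (N : nat) (A : 'M[R[i]]_N) (u : 'I_N) : Prop :=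
  exists C : R, 0 < C <= 1 /\
    forall t : R, 0 < t -> (C%:C)%C <= `|transition A t u u|.

From HB Require Import structures.
From mathcomp Require Import all_boot all_order all_algebra.
From mathcomp Require Import complex.
From mathcomp Require Import all_classical all_reals all_analysis.
From mathcomp Require Import ring lra.
Import Order.TTheory GRing.Theory Num.Theory ComplexField.
Import numFieldTopology.Exports numFieldNormedType.Exports.
Local Open Scope classical_set_scope.
Local Open Scope ring_scope.

(* The adjacency matrix A of K_{m,n} satisfies A^3 = mn A and (A^2)_{uu} = n,
   so the power series of e^{itA} at (u, u) collapses to
   1 - 1/m + cos (t sqrt(mn)) / m.  Its infimum over t is 1 - 2/m, which is
   positive exactly when m >= 3; for m <= 2 it vanishes where cos equals 1 - m. *)

Lemma normc_real (R : rcfType) (r : R) : `|r%:C%C| = `|r|%:C%C.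
Proof. by rewrite normc_def /= expr0n addr0 sqrtr_sqr. Qed.

Lemma cvg_complex_real (R : realType) (y : R^nat) (l : R) :
  y @ \oo --> l -> (fun k => (y k)%:C%C) @ \oo --> (l%:C%C : R[i]).
Proof.
move=> /cvgrPdist_lt y_l; apply/cvgrPdist_lt => -[e e_im].
rewrite ltcE /= => /andP[/eqP-> e0].
by apply: filterS (y_l e e0) => k; rewrite !complexr0 -rmorphB normc_real ltcR.
Qed.

Lemma cos_coeff_complex (R : realType) (s : R) k :
  (~~ odd k)%:R * ('i%C * s%:C%C) ^+ k / k`!%:R = (cos_coeff s k)%:C%C.
Proof.
rewrite /cos_coeff /=; case ko: (odd k) => /=.
  by rewrite mulr0n !mul0r rmorph0.
rewrite -[k](odd_double_half k) ko add0n doubleK -mul2n.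
rewrite exprMn exprM sqr_i -exprnP !rmorphM rmorphXn rmorphN1 fmorphV.
by rewrite !rmorph_nat rmorphXn mulrA.
Qed.

Lemma cvg_series_delta0 (R : realType) (a l : R) (b : R^nat) :
  series b @ \oo --> l ->
  series (fun k => a * (k == 0)%:R + b k) @ \oo --> a + l.
Proof.
move=> b_l; rewrite -cvg_shiftS.
suff -> : (fun k => series (fun k => a * (k == 0)%:R + b k) k.+1) =
          (fun k => a + series b k.+1).
  by apply: cvgD; [exact: cvg_cst | rewrite (cvg_shiftS (series b))].
apply/funext => k; rewrite /series /= !big_nat_recl //= mulr1 -addrA.
by congr (_ + _); under eq_bigr do rewrite mulr0 add0r.
Qed.

Lemma scalemx_exp (K : comPzRingType) N (a : K) (B : 'M[K]_N) k :
  (a *: B) ^+ k = a ^+ k *: B ^+ k.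
Proof.
elim: k => [|k IH]; first by rewrite !expr0 scale1r.
by rewrite !exprS IH -!mulmxE -scalemxAl -scalemxAr scalerA.
Qed.

Section CompleteBipartitePowers.
Variables (R : realType) (m n : nat).
Local Notation A := (Kmn_adj R m n).
Local Notation side i := (nat_of_ord i < m)%N.

Lemma mulmx_Kmn_adj (B : 'M[R[i]]_(m + n)) (g : bool -> bool -> R[i]) i l :
  (forall i k, B i k = g (side i) (side k)) ->
  (B *m A) i l = if side l then g (side i) false *+ n else g (side i) true *+ m.
Proof.
move=> Bg; have side_rshift k : (m + k < m)%N = false by rewrite ltnNge leq_addr.
rewrite mxE big_split_ord /=.
under eq_bigr do rewrite Bg /Kmn_adj mxE /= ltn_ord.
under [X in _ + X]eq_bigr do rewrite Bg /Kmn_adj mxE /= side_rshift.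
rewrite !sumr_const !card_ord.
by case: (side l); rewrite /= mulr0 mulr1 mul0rn ?add0r ?addr0.
Qed.

Lemma Kmn_adj_sqrE i l :
  (A ^+ 2) i l = (side i == side l)%:R *+ (if side l then n else m).
Proof.
rewrite expr2 -mulmxE (mulmx_Kmn_adj _ (fun a b => (a != b)%:R)) => [|i' k].
  by case: (side i); case: (side l).
by rewrite mxE.
Qed.

Lemma Kmn_adj_cube : A ^+ 3 = (m * n)%:R *: A.
Proof.
apply/matrixP => i l; rewrite exprSr -mulmxE.
rewrite (mulmx_Kmn_adj _ (fun a b => (a == b)%:R *+ (if b then n else m)));
  last exact: Kmn_adj_sqrE.
rewrite !mxE; case: (side i); case: (side l) => /=.
all: by rewrite ?mulr0n ?mulr1n ?mul0rn ?mulr0 ?mulr1 -?mulrnA // mulnC.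
Qed.

Lemma Kmn_adj_expD2 k j : A ^+ (k.+1 + j.*2) = (m * n)%:R ^+ j *: A ^+ k.+1.
Proof.
elim: j => [|j IH]; first by rewrite addn0 scale1r.
have ->: (k.+1 + j.+1.*2 = (k.+1 + j.*2) + 2)%N by rewrite doubleS !addnS addn0.
rewrite exprD IH -mulmxE -scalemxAl mulmxE -exprD.
rewrite addSnnS exprD Kmn_adj_cube.
by rewrite -mulmxE -scalemxAr mulmxE -exprSr scalerA -exprSr.
Qed.

Lemma Kmn_adj_exp_diag u k : side u ->
  (A ^+ k.+1) u u =
    (~~ odd k.+1)%:R * (Num.sqrt (m * n)%:R)%:C%C ^+ k.+1 / m%:R.
Proof.
move=> su; have m0 : m%:R != 0 :> R[i] by rewrite pnatr_eq0 -lt0n (leq_trans _ su).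
have sqr_sqrt : (Num.sqrt (m * n)%:R)%:C%C ^+ 2 = (m * n)%:R :> R[i].
  by rewrite -rmorphXn sqr_sqrtr ?ler0n // rmorph_nat.
rewrite -(odd_double_half k); set j := k./2.
case: (odd k); rewrite /= ?add0n ?add1n odd_double /=.
  rewrite -add2n Kmn_adj_expD2 mxE Kmn_adj_sqrE su eqxx mulr1n.
  by rewrite mul1r exprD -mul2n exprM !sqr_sqrt natrM; field.
by rewrite -add1n Kmn_adj_expD2 mxE expr1 /Kmn_adj mxE eqxx mulr0n mulr0 !mul0r.
Qed.

End CompleteBipartitePowers.

Definition return_amplitude {R : realType} (m : nat) (s : R) : R :=
  1 - m%:R^-1 + cos s / m%:R.

Lemma return_amplitude_ge (R : realType) (m : nat) (s : R) :
  (0 < m)%N -> 1 - 2 / m%:R <= return_amplitude m s.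
Proof.
move=> m0; have m_neq0 : m%:R != 0 :> R by rewrite pnatr_eq0 -lt0n.
rewrite /return_amplitude -(ler_pM2r (_ : 0 < m%:R)) ?ltr0n //.
rewrite !(mulrBl, mulrDl) mul1r mulVf // !mulfVK //.
by have := cos_geN1 s; lra.
Qed.

Lemma return_amplitude_root (R : realType) (m : nat) :
  (0 < m <= 2)%N -> exists2 s : R, 0 < s & return_amplitude m s = 0.
Proof.
case/andP=> m0 m2; have m0' : m%:R != 0 :> R by rewrite pnatr_eq0 -lt0n.
have m_range : -1 <= 1 - (m%:R : R) <= 1.
  have : 1 <= m%:R :> R by rewrite ler1n.
  have : m%:R <= 2 :> R by rewrite ler_nat.
  by move=> *; apply/andP; split; lra.
have [/andP[s_ge0 _] cos_s] := acos_def m_range.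
exists (acos (1 - m%:R)); last by rewrite /return_amplitude cos_s; field.
rewrite lt0r s_ge0 andbT; apply: contra_neq m0' => s0.
by move: cos_s; rewrite s0 cos0; lra.
Qed.

Lemma transition_Kmn_adj_diag (R : realType) (m n : nat) (u : 'I_(m + n)) (t : R) :
  (u < m)%N ->
  transition (Kmn_adj R m n) t u u =
    (return_amplitude m (t * Num.sqrt (m * n)%:R))%:C%C.
Proof.
move=> su; have m0 : m%:R != 0 :> R by rewrite pnatr_eq0 -lt0n (leq_trans _ su).
set s := t * _.
pose x (k : nat) : R := (1 - m%:R^-1) * (k == 0)%:R + cos_coeff s k / m%:R.
have term k : ((('i%C * t%:C%C) *: Kmn_adj R m n) ^+ k) u u / k`!%:R = (x k)%:C%C.
  rewrite scalemx_exp mxE; case: k => [|k].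
    by rewrite !expr0 mxE eqxx /x /cos_coeff /= !expr0 !mulr1 !divr1 mul1r subrK.
  rewrite Kmn_adj_exp_diag // /x mulr0n mulr0 add0r.
  have -> : (cos_coeff s k.+1 / m%:R)%:C%C = (cos_coeff s k.+1)%:C%C / m%:R.
    by rewrite [LHS]rmorphM fmorphV rmorph_nat.
  by rewrite -cos_coeff_complex /s [(t * _)%:C%C]rmorphM !exprMn; ring.
rewrite /transition /mxexp mxE.
have -> : series (fun k => ((('i%C * t%:C%C) *: Kmn_adj R m n) ^+ k) u u / k`!%:R) =
          (fun N => (series x N)%:C%C).
  by apply/funext => N; rewrite /series /= rmorph_sum; apply: eq_bigr.
apply: cvg_lim; first exact: norm_hausdorff.
apply/cvg_complex_real/cvg_series_delta0.
have -> : series (fun k => cos_coeff s k / m%:R) =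
          (fun N => series (cos_coeff s) N / m%:R).
  by apply/funext => N; rewrite /series /= mulr_suml.
apply: cvgMl; rewrite unlock; exact: is_cvg_series_cos_coeff.
Qed.

Theorem proposition39 (R : realType) (m n : nat) (hm : (1 <= m)%N) (hn : (1 <= n)%N)
  (u : 'I_(m + n)) (hu : (u < m)%N) :
  sedentary (Kmn_adj R m n) u <-> (3 <= m)%N.
Proof.
have sqrt_gt0 : 0 < Num.sqrt ((m * n)%:R : R) by rewrite sqrtr_gt0 ltr0n muln_gt0 hm hn.
have U_uu t : `|transition (Kmn_adj R m n) t u u| =
              `|return_amplitude m (t * Num.sqrt (m * n)%:R)|%:C%C.
  by rewrite transition_Kmn_adj_diag // normc_real.
split=> [[C [/andP[C_gt0 _] sedC]] | m_ge3].
  rewrite leqNgt; apply/negP => m_le2.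
  have [s s_gt0 ret0] : exists2 s : R, 0 < s & return_amplitude m s = 0.
    by apply: return_amplitude_root; rewrite hm.
  have := sedC (s / Num.sqrt (m * n)%:R) (divr_gt0 s_gt0 sqrt_gt0).
  by rewrite U_uu mulfVK ?gt_eqF // ret0 normr0 lecR leNgt C_gt0.
exists (1 - 2 / m%:R); split.
  rewrite subr_gt0 ltr_pdivrMr ?ltr0n // mul1r ltr_nat m_ge3 /=.
  by rewrite lerBlDr lerDl divr_ge0.
move=> t _; rewrite U_uu lecR.
exact: le_trans (return_amplitude_ge _ _ _ hm) (ler_norm _).
Qed.
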